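(* Let $f(t)=\sum_{k=0}^{D}c_k\binom{D}{k}t^k(1-t)^{D-k}$ for $t\in[0,1]$. Then: (1) $f'(t)\ge0$ for all $t\in[0,1]$. (2) If the Increasing Conditional Divergence (ICD) condition holds, i.e. $\Delta_i(S)\le\Delta_i(T)$ for all $i\in[D]$ and all $S\subseteq T\subseteq[D]\setminus\{i\}$, then $f''(t)\ge0$ for all $t\in[0,1]$. (3) If moreover the second-order ICD condition holds, i.e. $\Delta_i(S\cup\{j\})-\Delta_i(S)\le\Delta_i(S\cup\{j,\ell\})-\Delta_i(S\cup\{\ell\})$ for all distinct $i,j,\ell\in[D]$ and all $S\subseteq[D]\setminus\{i,j,\ell\}$, then $f^{(3)}(t)\ge0$ for all $t\in[0,1]$.
   Context: Let $\mathcal X$ be a finite alphabet, $D\ge1$, $[D]=\{1,\dots,D\}$, and $p_0,\pi_0$ probability distributions on $\mathcal X^D$ with $\pi_0$ of full support. For $U\subseteq[D]$ let $F(U)=\mathrm{KL}\big(p_0^{(U)}\|\pi_0^{(U)}\big)$, where $p_0^{(U)}$ is the marginal of $p_0$ on the coordinates in $U$, and $F(\emptyset)=0$. For $i\notin U$ let $\Delta_i(U)=F(U\cup\{i\})-F(U)$. For $0\le k\le D$ let $c_k=\binom{D}{k}^{-1}\sum_{|U|=k}F(U)$ (the average of $F$ over subsets of size $k$). *)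

From HB Require Import structures.
From mathcomp Require Import all_boot all_order all_algebra.
From mathcomp Require Import reals exp.
Set Implicit Arguments. Unset Strict Implicit. Unset Printing Implicit Defensive.
Import Order.TTheory GRing.Theory Num.Theory.
Local Open Scope ring_scope.

Section Defs.
Variables (R : realType) (X : finType) (D : nat).

Definition config := {ffun 'I_D -> X}.

Definition subconfig (U : {set 'I_D}) := {ffun {i : 'I_D | i \in U} -> X}.

Definition marginal (p : config -> R) (U : {set 'I_D}) (y : subconfig U) : R :=
  \sum_(x : config | [forall i, x (val i) == y i]) p x.

(* KL divergence between finite distributions (with 0 log 0 = 0 since
   the term is multiplied by the mass) *)
Definition KLdiv (T : finType) (p q : T -> R) : R :=
  \sum_(y : T) p y * ln (p y / q y).

Definition Fdiv (p0 pi0 : config -> R) (U : {set 'I_D}) : R :=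
  KLdiv (marginal p0 (U:=U)) (marginal pi0 (U:=U)).

Definition Delta (p0 pi0 : config -> R) (i : 'I_D) (U : {set 'I_D}) : R :=
  Fdiv p0 pi0 (i |: U) - Fdiv p0 pi0 U.

Definition cavg (p0 pi0 : config -> R) (k : nat) : R :=
  (\sum_(U : {set 'I_D} | #|U| == k) Fdiv p0 pi0 U) / ('C(D, k))%:R.

Definition fpoly (p0 pi0 : config -> R) : {poly R} :=
  \sum_(k < D.+1) (cavg p0 pi0 k * ('C(D, k))%:R) *: ('X ^+ k * (1 - 'X) ^+ (D - k)).

Definition is_distr (p : config -> R) : Prop :=
  (forall x, 0 <= p x) /\ \sum_x p x = 1.

Definition ICD (p0 pi0 : config -> R) : Prop :=
  forall (i : 'I_D) (S T : {set 'I_D}), S \subset T -> i \notin T ->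
    Delta p0 pi0 i S <= Delta p0 pi0 i T.

Definition ICD2 (p0 pi0 : config -> R) : Prop :=
  forall (i j l : 'I_D) (S : {set 'I_D}),
    i != j -> i != l -> j != l -> i \notin S -> j \notin S -> l \notin S ->
    Delta p0 pi0 i (j |: S) - Delta p0 pi0 i S <=
    Delta p0 pi0 i (j |: (l |: S)) - Delta p0 pi0 i (l |: S).

End Defs.

(* Grouping subsets by size, f(t) = sum_U F(U) t^|U| (1-t)^(D-|U|).  The derivative of
   sum_U H(U) t^|U| (1-t)^(D-m-|U|) has the same shape, with m+1 in place of m and
   coefficients sum_(l \notin U) H(U + l) - (D-m-|U|) H(U); when H(U) is itself a sum over
   indices avoiding U, these are sums of forward differences in a fresh direction l.  So the
   coefficients of f', f'' and f''' are sums of Delta_i(U), of Delta_i(U + j) - Delta_i(U),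
   and of second differences of Delta_i: they are nonnegative by the log-sum inequality
   (marginalization does not increase KL divergence), by ICD and by second-order ICD.
   A polynomial of this shape with nonnegative coefficients is nonnegative on [0, 1]. *)

From HB Require Import structures.
From mathcomp Require Import all_boot all_order all_algebra.
From mathcomp Require Import reals exp.
From mathcomp Require Import ring lra zify.
Import Order.TTheory GRing.Theory Num.Theory.
Set Implicit Arguments.
Unset Strict Implicit.
Unset Printing Implicit Defensive.

Local Open Scope ring_scope.

Section LogSum.
Variable R : realType.

Lemma ln_le_subr1 (x : R) : 0 < x -> ln x <= x - 1.
Proof. by move=> x_gt0; have := @le_ln1Dx R (x - 1); rewrite addrCA subrr addr0; apply; lra. Qed.

Lemma mulr_ln_div_ge (a p q : R) : 0 < a -> 0 <= p -> 0 <= q -> (q = 0 -> p = 0) ->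
  p * ln a + (p - q * a) <= p * ln (p / q).
Proof.
move=> a_gt0 p_ge0 q_ge0 qp.
have [->|p_neq0] := eqVneq p 0.
  by rewrite !mul0r add0r sub0r oppr_le0 mulr_ge0 // ltW.
have p_gt0 : 0 < p by rewrite lt_def p_neq0.
have q_gt0 : 0 < q by rewrite lt_def q_ge0 andbT; apply: contra_neq p_neq0.
set w := p / q / a.
have w_gt0 : 0 < w by rewrite !divr_gt0.
have -> : ln (p / q) = ln a + ln w.
  by rewrite -lnM ?posrE // /w [a * _]mulrC divfK // gt_eqF.
have lnw_ge : 1 - w^-1 <= ln w.
  by have := @ln_le_subr1 w^-1; rewrite invr_gt0 => /(_ w_gt0); rewrite lnV ?posrE //; lra.
have -> : p - q * a = p * (1 - w^-1) by rewrite /w; field; rewrite !gt_eqF.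
by rewrite [in leRHS]mulrDr lerD2l ler_pM2l.
Qed.

Lemma log_sum_le (I : finType) (P : pred I) (p q : I -> R) :
  (forall i, 0 <= p i) -> (forall i, 0 <= q i) -> (forall i, q i = 0 -> p i = 0) ->
  (\sum_(i | P i) p i) * ln ((\sum_(i | P i) p i) / (\sum_(i | P i) q i))
    <= \sum_(i | P i) p i * ln (p i / q i).
Proof.
move=> p_ge0 q_ge0 qp; set Ps := \sum_(i | P i) p i; set Qs := \sum_(i | P i) q i.
have [Ps0|Ps_neq0] := eqVneq Ps 0.
  by rewrite Ps0 mul0r big1 // => i Pi; rewrite (psumr_eq0P _ Ps0) ?mul0r.
have Qs_gt0 : 0 < Qs.
  rewrite lt_def sumr_ge0 // andbT; apply: contraNneq Ps_neq0 => /psumr_eq0P Q0.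
  by rewrite /Ps big1 // => i Pi; apply/qp/Q0.
have a_gt0 : 0 < Ps / Qs by rewrite divr_gt0 // lt_def Ps_neq0 sumr_ge0.
apply: le_trans (ler_sum _ (fun i _ => mulr_ln_div_ge a_gt0 (p_ge0 i) (q_ge0 i) (@qp i))).
rewrite big_split sumrB /= -!mulr_suml -/Ps -/Qs [Qs * _]mulrC divfK ?gt_eqF //.
by rewrite subrr addr0.
Qed.

End LogSum.

Lemma KLdiv_pushforward_le (R : realType) (A B : finType) (r : A -> B) (p q : A -> R) :
  (forall a, 0 <= p a) -> (forall a, 0 <= q a) -> (forall a, q a = 0 -> p a = 0) ->
  KLdiv (fun b => \sum_(a | r a == b) p a) (fun b => \sum_(a | r a == b) q a) <= KLdiv p q.
Proof.
move=> p_ge0 q_ge0 qp; rewrite /KLdiv (partition_big r xpredT) //=.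
by apply: ler_sum => b _; apply: log_sum_le.
Qed.

Section Marginals.
Variables (R : realType) (X : finType) (D : nat).

Definition restrict_config (W : {set 'I_D}) (x : config X D) : subconfig X W :=
  [ffun k => x (val k)].

Definition restrict_subconfig {V W : {set 'I_D}} (sVW : V \subset W)
    (z : subconfig X W) : subconfig X V :=
  [ffun k => z (exist _ (val k) (subsetP sVW _ (valP k)))].

Lemma marginal_restrict (p : config X D -> R) {V W : {set 'I_D}} (sVW : V \subset W)
    (y : subconfig X V) :
  marginal p y = \sum_(z | restrict_subconfig sVW z == y) marginal p z.
Proof.
rewrite /marginal (partition_big (restrict_config W) (fun z => restrict_subconfig sVW z == y)).
  apply: eq_bigr => z /eqP <-; apply: eq_bigl => x.
  apply/andP/forallP => [[_ /eqP <-] i|xz]; first by rewrite ffunE.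
  have <- : restrict_config W x = z by apply/ffunP => i; rewrite ffunE; apply/eqP.
  by split=> //; apply/forallP => i; rewrite !ffunE.
move=> x /forallP xy; apply/eqP/ffunP => i; rewrite !ffunE /=.
exact/eqP/xy.
Qed.

Variables (p0 pi0 : config X D -> R).
Hypothesis p0_ge0 : forall x, 0 <= p0 x.
Hypothesis pi0_gt0 : forall x, 0 < pi0 x.

Lemma le_Fdiv (V W : {set 'I_D}) : V \subset W -> Fdiv p0 pi0 V <= Fdiv p0 pi0 W.
Proof.
move=> sVW; rewrite /Fdiv.
have -> : KLdiv (marginal p0 (U:=V)) (marginal pi0 (U:=V)) =
    KLdiv (fun y => \sum_(z | restrict_subconfig sVW z == y) marginal p0 z)
          (fun y => \sum_(z | restrict_subconfig sVW z == y) marginal pi0 z).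
  by apply: eq_bigr => y _; rewrite !(marginal_restrict _ sVW).
apply: KLdiv_pushforward_le => [z|z|z /psumr_eq0P pi0z].
- exact: sumr_ge0.
- by apply: sumr_ge0 => x _; apply/ltW.
apply: big1 => x xz; have := pi0_gt0 x.
by rewrite pi0z ?ltxx // => y _; apply/ltW.
Qed.

Lemma Delta_ge0 i U : 0 <= Delta p0 pi0 i U.
Proof. by rewrite subr_ge0 le_Fdiv // subsetUr. Qed.

End Marginals.

Lemma sum_pointed_sets (T : finType) (V : nmodType) (K : {set T} -> T -> V) :
  \sum_(U : {set T}) \sum_(i in U) K U i = \sum_(U : {set T}) \sum_(i in ~: U) K (i |: U) i.
Proof.
rewrite (exchange_big_dep xpredT) //= [RHS](exchange_big_dep xpredT) //=.
apply: eq_bigr => i _.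
rewrite (reindex_onto (fun U => i |: U) (fun U => U :\ i)) /=; last by move=> U iU; rewrite setD1K.
apply: eq_bigl => U; rewrite setU11 /= in_setC.
apply/eqP/idP => [<-|iU]; last by rewrite setU1K.
by rewrite setD11.
Qed.

Lemma card_setC_setU (T : finType) (A U : {set T}) :
  A \subset ~: U -> #|~: (A :|: U)| = (#|T| - #|A| - #|U|)%N.
Proof.
rewrite -disjoints_subset => /disjoint_setI0 AU0.
by have := cardsC (A :|: U); rewrite cardsU AU0 cards0; lia.
Qed.

Section BernsteinSums.
Variables (R : numDomainType) (T : finType).

Definition bern (m : nat) (U : {set T}) : {poly R} :=
  'X^#|U| * (1 - 'X) ^+ (#|T| - m - #|U|).

Definition bernpoly (m : nat) (H : {set T} -> R) : {poly R} := \sum_U H U *: bern m U.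

Definition bern_diff (m : nat) (H : {set T} -> R) (U : {set T}) : R :=
  \sum_(i in ~: U) H (i |: U) - (#|T| - m - #|U|)%:R * H U.

Lemma deriv_bern m U :
  (bern m U)^`() =
    ('X^(#|U|.-1) * (1 - 'X) ^+ (#|T| - m - #|U|)) *+ #|U| - bern m.+1 U *+ (#|T| - m - #|U|).
Proof.
rewrite /bern derivM derivXn deriv_exp derivB derivC derivX sub0r mulN1r.
have -> : (#|T| - m.+1 - #|U| = (#|T| - m - #|U|).-1)%N by lia.
by rewrite mulrnAl mulrnAr mulrN mulNrn.
Qed.

Lemma deriv_bernpoly m H : (bernpoly m H)^`() = bernpoly m.+1 (bern_diff m H).
Proof.
rewrite /bernpoly /bern_diff linear_sum /=.
under eq_bigr do rewrite linearZ /= deriv_bern scalerBr.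
under [RHS]eq_bigr do rewrite scalerBl.
rewrite !sumrB; congr (_ - _); last first.
  by apply: eq_bigr => U _; rewrite -scalerA scaler_nat scalerMnr.
transitivity (\sum_(U : {set T}) \sum_(i in U)
                H U *: ('X^(#|U|.-1) * (1 - 'X) ^+ (#|T| - m - #|U|))).
  by apply: eq_bigr => U _; rewrite sumr_const scalerMnr.
rewrite sum_pointed_sets; apply: eq_bigr => U _; rewrite scaler_suml; apply: eq_bigr => i.
rewrite in_setC => iU; rewrite cardsU1 iU /bern /=; congr (_ *: (_ * _)); congr (_ ^+ _); lia.
Qed.

Lemma bernpoly_ge0 m H t : (forall U, 0 <= H U) -> 0 <= t <= 1 -> 0 <= (bernpoly m H).[t].
Proof.
move=> H_ge0 /andP [t_ge0 t_le1]; rewrite /bernpoly horner_sum; apply: sumr_ge0 => U _.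
rewrite hornerZ /bern hornerM hornerXn horner_exp hornerD hornerN hornerX hornerC.
by rewrite !mulr_ge0 ?exprn_ge0 ?subr_ge0.
Qed.

Lemma bern_diff_sum (I : finType) (P : pred I) (A : I -> {set T}) (k : nat)
    (K : I -> {set T} -> R) (H : {set T} -> R) :
  (forall s, P s -> #|A s| = k) ->
  (forall U, H U = \sum_(s | P s && (A s \subset ~: U)) K s U) ->
  forall U, bern_diff k H U =
    \sum_(s | P s && (A s \subset ~: U)) \sum_(l in ~: (A s :|: U)) (K s (l |: U) - K s U).
Proof.
move=> cardA HK U; rewrite /bern_diff.
(* A fresh direction l extends exactly the s avoiding l |: U, and every s avoiding U
   has #|T| - k - #|U| fresh directions. *)
under eq_bigr do rewrite HK.
rewrite HK mulr_sumr (exchange_big_dep (fun s => P s && (A s \subset ~: U))) /=; last first.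
  move=> l s _ /andP [-> sAlU]; apply: subset_trans sAlU _.
  by rewrite setCS subsetUr.
rewrite -sumrB; apply: eq_bigr => s /andP [Ps sAU].
rewrite sumrB; congr (_ - _).
  apply: eq_bigl => l; rewrite Ps setCU subsetI -disjoints_subset disjoint_sym disjoints1.
  by rewrite sAU !in_setC in_setU negb_or andbC andbT.
by rewrite sumr_const card_setC_setU // cardA // mulr_natl.
Qed.

End BernsteinSums.

Section Derivatives.
Variables (R : realType) (X : finType) (D : nat) (p0 pi0 : config X D -> R).

Local Notation F := (Fdiv p0 pi0).
Local Notation Delta := (Delta p0 pi0).

Lemma fpoly_bernpoly : fpoly p0 pi0 = bernpoly 0 F.
Proof.
rewrite /fpoly /bernpoly /bern card_ord.
rewrite (partition_big (fun U : {set 'I_D} => inord #|U| : 'I_D.+1) xpredT) //=.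
apply: eq_bigr => k _.
have Ck_neq0 : 'C(D, k)%:R != 0 :> R by rewrite pnatr_eq0 -lt0n bin_gt0 -ltnS.
rewrite /cavg divfK // scaler_suml; apply: eq_big => [U|U /eqP <-]; last by rewrite subn0.
have := max_card U; rewrite card_ord => cardU.
by rewrite -[in RHS](inj_eq val_inj) /= inordK.
Qed.

Lemma bern_diff_Fdiv U : bern_diff 0 F U = \sum_(i in ~: U) Delta i U.
Proof.
rewrite /bern_diff /Delta sumrB sumr_const subn0 mulr_natl.
by have := cardsC U; rewrite card_ord => cardUC; congr (_ - _ *+ _); lia.
Qed.

Lemma bern_diff2_Fdiv U :
  bern_diff 1 (bern_diff 0 F) U =
    \sum_(p | (p.1 != p.2) && ([set p.1; p.2] \subset ~: U)) (Delta p.1 (p.2 |: U) - Delta p.1 U).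
Proof.
rewrite (bern_diff_sum (P := xpredT) (A := set1) (K := Delta)) => [||V]; first last.
- by rewrite bern_diff_Fdiv; apply: eq_bigl => i; rewrite sub1set.
- by move=> i _; rewrite cards1.
rewrite pair_big_dep; apply: eq_bigl => -[i j] /=.
rewrite subUset !sub1set !in_setC in_setU !in_set1 negb_or [j == i]eq_sym.
by case: (i == j); case: (i \in U); case: (j \in U).
Qed.

Lemma bern_diff3_Fdiv U :
  bern_diff 2 (bern_diff 1 (bern_diff 0 F)) U =
    \sum_(p | (p.1 != p.2) && ([set p.1; p.2] \subset ~: U))
      \sum_(l in ~: ([set p.1; p.2] :|: U))
        ((Delta p.1 (p.2 |: (l |: U)) - Delta p.1 (l |: U)) - (Delta p.1 (p.2 |: U) - Delta p.1 U)).
Proof.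
apply: (bern_diff_sum (P := fun p => p.1 != p.2) (A := fun p => [set p.1; p.2])
  (K := fun p V => Delta p.1 (p.2 |: V) - Delta p.1 V)) => [[i j] /= ij|V].
  by rewrite cards2 ij.
exact: bern_diff2_Fdiv.
Qed.

Lemma bern_diff_Fdiv_ge0 U :
  (forall x, 0 <= p0 x) -> (forall x, 0 < pi0 x) -> 0 <= bern_diff 0 F U.
Proof.
by move=> p0_ge0 pi0_gt0; rewrite bern_diff_Fdiv sumr_ge0 // => i _; apply: Delta_ge0.
Qed.

Lemma bern_diff2_Fdiv_ge0 U : ICD p0 pi0 -> 0 <= bern_diff 1 (bern_diff 0 F) U.
Proof.
move=> icd; rewrite bern_diff2_Fdiv sumr_ge0 // => -[i j] /andP [/= ij].
rewrite subUset !sub1set !in_setC => /andP [iU jU].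
by rewrite subr_ge0 icd ?subsetUr // in_setU1 negb_or ij.
Qed.

Lemma bern_diff3_Fdiv_ge0 U :
  ICD2 p0 pi0 -> 0 <= bern_diff 2 (bern_diff 1 (bern_diff 0 F)) U.
Proof.
move=> icd2; rewrite bern_diff3_Fdiv sumr_ge0 // => -[i j] /andP [/= ij].
rewrite subUset !sub1set !in_setC => /andP [iU jU].
rewrite sumr_ge0 // => l.
rewrite !in_setC !in_setU !in_set1 !negb_or => /andP [/andP [li lj] lU].
by rewrite subr_ge0 icd2 // eq_sym.
Qed.

End Derivatives.

Theorem mainTheorem6 (R : realType) (X : finType) (D : nat)
  (p0 pi0 : config X D -> R) :
  (0 < D)%N ->
  is_distr p0 -> is_distr pi0 -> (forall x, 0 < pi0 x) ->
  [/\ (forall t : R, 0 <= t <= 1 -> 0 <= (fpoly p0 pi0)^`().[t]),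
      (ICD p0 pi0 -> forall t : R, 0 <= t <= 1 -> 0 <= (fpoly p0 pi0)^`(2).[t]) &
      (ICD p0 pi0 -> ICD2 p0 pi0 ->
         forall t : R, 0 <= t <= 1 -> 0 <= (fpoly p0 pi0)^`(3).[t])].
Proof.
move=> _ [p0_ge0 _] _ pi0_gt0.
have d1 : (fpoly p0 pi0)^`() = bernpoly 1 (bern_diff 0 (Fdiv p0 pi0)).
  by rewrite fpoly_bernpoly deriv_bernpoly.
have d2 : (fpoly p0 pi0)^`(2) = bernpoly 2 (bern_diff 1 (bern_diff 0 (Fdiv p0 pi0))).
  by rewrite derivnS derivn1 d1 deriv_bernpoly.
have d3 : (fpoly p0 pi0)^`(3) =
    bernpoly 3 (bern_diff 2 (bern_diff 1 (bern_diff 0 (Fdiv p0 pi0)))).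
  by rewrite derivnS d2 deriv_bernpoly.
split=> [t|icd t|_ icd2 t] t01; rewrite ?d1 ?d2 ?d3 bernpoly_ge0 // => U.
- exact: bern_diff_Fdiv_ge0.
- exact: bern_diff2_Fdiv_ge0.
- exact: bern_diff3_Fdiv_ge0.
Qed.
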